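(* In any iteration of Algorithm 1, if there exist an integer $m\ge1$ and an index $j\in\{1,\dots,n\}$ such that $i^*=b^m(j)$, then $\mathrm{avg}(j,b(i^* ))<\mathrm{avg}(j,i^* )$.
   Context: Problem (P): given an integer $n\ge1$, reals $0<q_1\le\cdots\le q_n$, $z_1,\dots,z_n>0$ and $K>0$, maximize $\sum_{i=1}^n x_i$ subject to $0\le x_i\le q_i$, $0\le x_1\le\cdots\le x_n$, $\sum_{i=1}^n z_ix_i\le K$. For $1\le i<j\le n+1$ let $\mathrm{sum}(i,j)=z_i+\cdots+z_{j-1}$ and $\mathrm{avg}(i,j)=\mathrm{sum}(i,j)/(j-i)$. Algorithm 1 (run on an instance of (P)): Initialize $S=\{0,n+1\}$, $y_i=\mathrm{avg}(i,n+1)$ and $x_i=0$ for $i=1,\dots,n$, and $\hat B=K$. While $\hat B>0$ and $S\ne\{0,1,\dots,n+1\}$, perform an iteration: let $i^*$ be the index $i\in\{1,\dots,n\}\setminus S$ minimizing $y_i$, ties broken in favour of the smallest index; let $i_L=\max\{j\in S:j<i^*\}$ and $i_R=\min\{j\in S:j>i^*\}$; set $d=\min\{\hat B/((i_R-i^* )y_{i^*}),\ q_{i^*}-x_{i^*}\}$; set $\hat B\leftarrow\hat B-d(i_R-i^* )y_{i^*}$; set $x_i\leftarrow x_i+d$ for all $i^*\le i<i_R$; set $y_i\leftarrow\mathrm{avg}(i,i^* )$ for all $i_L<i<i^*$; add $i^*$ to $S$. Finally output $x_1,\dots,x_n$. Blocker: for $1\le i\le n$, $b(i)$ is the value of $i^*$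 in the last iteration in which $y_i$ is updated (i.e. the last iteration with $i_L<i<i^*$); if $y_i$ is never updated, $b(i)=n+1$. Iterates: $b^0$ is the identity and $b^m(i)=b(b^{m-1}(i))$ (defined as long as $b^{m-1}(i)\le n$). *)

From HB Require Import structures.
From mathcomp Require Import all_boot all_order all_algebra.
Set Implicit Arguments. Unset Strict Implicit. Unset Printing Implicit Defensive.
Import Order.TTheory GRing.Theory Num.Theory.
Local Open Scope ring_scope.

Section Alg1.
Variable R : realFieldType.
Variable n : nat.
Variables (q z : nat -> R) (K : R).

Definition sumz (i j : nat) : R := \sum_(i <= k < j) z k.
Definition avg (i j : nat) : R := sumz i j / (j - i)%:R.

(* State of Algorithm 1: the set S (as a boolean predicate on nat),
   the vectors y and x (indexed by 1..n), and the budget B^. *)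
Record state := State { stS : nat -> bool; sty : nat -> R; stx : nat -> R; stB : R }.

Definition init : state :=
  State (fun k => (k == 0)%N || (k == n.+1)) (fun i => avg i n.+1) (fun _ => 0) K.

(* loop condition: B^ > 0 and S <> {0,1,...,n+1} (0 and n+1 always lie in S) *)
Definition cont (st : state) : bool :=
  (0 < stB st) && has (fun i => ~~ stS st i) (iota 1 n).

(* i* : the index i in {1..n} \ S minimizing y_i, smallest such index on ties *)
Definition istar (st : state) : nat :=
  head 0%N [seq i <- iota 1 n | ~~ stS st i &&
                 all (fun k => stS st k || (sty st i <= sty st k)) (iota 1 n)].

Definition iL (st : state) (i : nat) : nat := last 0%N [seq j <- iota 0 i | stS st j].
Definition iR (st : state) (i : nat) : nat :=
  head n.+1 [seq j <- iota i.+1 (n.+1 - i) | stS st j].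

Definition step (st : state) : state :=
  let i := istar st in
  let L := iL st i in
  let Rr := iR st i in
  let d := Num.min (stB st / ((Rr - i)%:R * sty st i)) (q i - stx st i) in
  State (fun k => stS st k || (k == i))
        (fun k => if (L < k < i)%N then avg k i else sty st k)
        (fun k => if (i <= k < Rr)%N then stx st k + d else stx st k)
        (stB st - d * (Rr - i)%:R * sty st i).

Definition step_if (st : state) : state := if cont st then step st else st.

(* state before iteration t (0-indexed) *)
Definition run (t : nat) : state := iter t step_if init.

Definition performed (t : nat) : bool := all (fun s => cont (run s)) (iota 0 t.+1).

Definition updates (t i : nat) : bool :=
  (iL (run t) (istar (run t)) < i < istar (run t))%N.

(* Algorithm 1 performs at most n iterations (each adds a new element of {1..n} to S),
   so it suffices to search iterations 0..n-1. *)
Definition blocker (i : nat) : nat :=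
  let ts := [seq t <- iota 0 n | performed t && updates t i] in
  if ts is [::] then n.+1 else istar (run (last 0%N ts)).

End Alg1.

From HB Require Import structures.
From mathcomp Require Import all_boot all_order all_algebra.
From mathcomp Require Import zify ring.
Set Implicit Arguments. Unset Strict Implicit. Unset Printing Implicit Defensive.
Import Order.TTheory GRing.Theory Num.Theory.
Local Open Scope ring_scope.

(* Throughout the run, every index i outside S satisfies y_i = avg(i, r), where
   r = i_R(i) is its right neighbour in S, and r is also the last i* that
   updated y_i.  Hence if c is chosen as i* at some iteration, b(c) is the right
   neighbour r of c at that iteration.  If b(a) = c, then at the iteration that
   chose c and last updated y_a, the indices a < c share this neighbour r, and
   since ties are broken towards smaller indices, y_c < y_a, i.e.
   avg(c, r) < avg(a, r); as avg(a, r) is a convex combination of avg(a, c)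
   and avg(c, r), this says avg(c, b(c)) < avg(a, c).  So along
   j < b(j) < b^2(j) < ... the consecutive averages decrease strictly, and
   avg(j, c), a convex combination of the consecutive averages up to c, stays
   above the next one, avg(c, b(c)) for c = b^m(j); by convexity once more
   this is the claim. *)

Lemma head_filter_iota (p : pred nat) a m d : has p (iota a m) ->
  let x := head d [seq k <- iota a m | p k] in
  [/\ (a <= x < a + m)%N, p x & forall k, (a <= k < x)%N -> ~~ p k].
Proof.
elim: m a => [|m IH] a //=; case pa: (p a) => /= has_p.
  by split=> // [|k]; lia.
have [x_range px x_first] := IH a.+1 has_p.
split=> // [|k k_range]; first lia.
by case: (k =P a) => [->|ne]; [rewrite pa | apply: x_first; lia].
Qed.

Lemma last_filter_iota (p : pred nat) i : p 0%N -> (0 < i)%N ->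
  let x := last 0%N [seq k <- iota 0 i | p k] in
  [/\ (x < i)%N, p x & forall k, (x < k < i)%N -> ~~ p k].
Proof.
move=> p0; elim: i => [|i IH] // _.
rewrite -addn1 iotaD filter_cat last_cat add0n /=.
case pi: (p i) => /=; first by split=> // [|k]; lia.
case: i IH pi => [|i] IH pi; first by rewrite pi in p0.
have [x_lt px x_last] := IH isT.
split=> // [|k k_range]; first lia.
by case: (k =P i.+1) => [->|ne]; [rewrite pi | apply: x_last; lia].
Qed.

Lemma has_minimizer (T : eqType) disp (O : orderType disp)
    (s : seq T) (P : pred T) (f : T -> O) :
  has P s -> exists2 x, x \in s & P x && all (fun k => P k ==> (f x <= f k)%O) s.
Proof.
set leT := fun x y => (f x <= f y)%O.
have leT_total : total leT by move=> x y; exact: le_total.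
have leT_trans : transitive leT by move=> y x w; exact: le_trans.
move=> /hasP [y ys Py].
case E: (sort leT [seq k <- s | P k]) => [|x s'].
  by have := mem_sort leT [seq k <- s | P k] y; rewrite E mem_filter Py ys.
have x_in : x \in [seq k <- s | P k] by rewrite -(mem_sort leT) E mem_head.
have x_min : all (leT x) s'.
  by have := sort_sorted leT_total [seq k <- s | P k]; rewrite E => /(order_path_min leT_trans).
move: x_in; rewrite mem_filter => /andP [Px xs]; exists x => //.
rewrite Px; apply/allP => k ks; apply/implyP => Pk.
have : k \in x :: s' by rewrite -E mem_sort mem_filter Pk.
by rewrite inE => /orP [/eqP ->|/(allP x_min)].
Qed.

Section Averages.
Variables (R : realFieldType) (z : nat -> R).

Lemma sumz_cat a b c : (a <= b <= c)%N -> sumz z a c = sumz z a b + sumz z b c.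
Proof. by move=> /andP [ab bc]; rewrite /sumz (big_cat_nat ab bc). Qed.

Lemma avg_convex a b c : (a < b < c)%N ->
  exists2 w : R, 0 < w < 1 & avg z a c = w * avg z a b + (1 - w) * avg z b c.
Proof.
move=> abc; exists ((b - a)%:R / (c - a)%:R).
  by rewrite divr_gt0 ?ltr_pdivrMr ?mul1r ?ltr0n ?ltr_nat //=; lia.
have ca_split : (c - a)%:R = (b - a)%:R + (c - b)%:R :> R.
  by rewrite -natrD; congr _%:R; lia.
have [ba_neq0 cb_neq0] : (b - a)%:R != 0 :> R /\ (c - b)%:R != 0 :> R.
  by rewrite !pnatr_eq0; split; lia.
rewrite /avg (@sumz_cat a b c); last lia.
rewrite ca_split; field.
by rewrite ba_neq0 cb_neq0 -ca_split pnatr_eq0 /=; lia.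
Qed.

Lemma avg_ltr_splitE a b c : (a < b < c)%N ->
  (avg z b c < avg z a c) = (avg z b c < avg z a b).
Proof.
case/avg_convex => w /andP [w_gt0 _] ->.
rewrite -subr_gt0 -[X in _ = X]subr_gt0.
have -> : w * avg z a b + (1 - w) * avg z b c - avg z b c = w * (avg z a b - avg z b c) by ring.
by rewrite pmulr_rgt0.
Qed.

Lemma avg_ltl_splitE a b c : (a < b < c)%N ->
  (avg z a c < avg z a b) = (avg z b c < avg z a b).
Proof.
case/avg_convex => w /andP [_ w_lt1] ->.
rewrite -subr_gt0 -[X in _ = X]subr_gt0.
have -> : avg z a b - (w * avg z a b + (1 - w) * avg z b c) = (1 - w) * (avg z a b - avg z b c) by ring.
by rewrite pmulr_rgt0 // subr_gt0.
Qed.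

Lemma avg_chain_lt (c : nat -> nat) m : (0 < m)%N ->
  (forall k, (k <= m)%N -> (c k < c k.+1)%N) ->
  (forall k, (k < m)%N -> avg z (c k.+1) (c k.+2) < avg z (c k) (c k.+1)) ->
  avg z (c 0) (c m.+1) < avg z (c 0) (c m).
Proof.
move=> m_gt0 c_incr avg_decr.
have tail_lt k : (k < m)%N ->
    (c 0 < c k.+1)%N /\ avg z (c k.+1) (c k.+2) < avg z (c 0) (c k.+1).
  elim: k => [|k IH] km; first by split; [apply: c_incr | apply: avg_decr].
  have [c0_lt avg_lt] := IH (ltnW km).
  have ck_lt := c_incr k.+1 (ltnW km).
  split; first lia.
  apply: lt_trans (avg_decr _ km) _.
  by rewrite avg_ltr_splitE ?c0_lt ?ck_lt.
case: m m_gt0 c_incr avg_decr tail_lt => // m _ c_incr _ tail_lt.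
have [c0_lt avg_lt] := tail_lt m (ltnSn m).
by rewrite avg_ltl_splitE ?c0_lt ?c_incr.
Qed.

End Averages.

Section Gaps.
Variables (R : realFieldType) (n : nat) (st : state R).
Hypothesis Sn : stS st n.+1.

Lemma istar_spec : cont n st ->
  let c := istar n st in
  [/\ (1 <= c <= n)%N, ~~ stS st c &
      forall k, (1 <= k < c)%N -> ~~ stS st k -> sty st c < sty st k].
Proof.
case/andP => _ has_free.
have [x x_in /andP [x_free x_min]] := has_minimizer (sty st) has_free.
set p := fun i => ~~ stS st i && all (fun k => stS st k || (sty st i <= sty st k)) (iota 1 n).
have has_p : has p (iota 1 n).
  apply/hasP; exists x => //; rewrite /p x_free /=.
  by apply/allP => k k_in; rewrite -implyNb; exact: (allP x_min).
have [c_range /andP [c_free c_min] c_first] := head_filter_iota 0%N has_p.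
rewrite /istar -/p; split=> // k k_range k_free.
have := c_first k k_range; rewrite /p k_free /= => /allPn [k' k'_in].
rewrite negb_or -ltNge => /andP [k'_free lt_k'].
by apply: le_lt_trans lt_k'; move/allP: c_min => /(_ k' k'_in); rewrite (negbTE k'_free).
Qed.

Lemma iL_spec i : stS st 0 -> (0 < i)%N ->
  let L := iL st i in
  [/\ (L < i)%N, stS st L & forall k, (L < k < i)%N -> ~~ stS st k].
Proof. exact: last_filter_iota. Qed.

Lemma iR_spec i : (i <= n)%N ->
  let r := iR n st i in
  [/\ (i < r <= n.+1)%N, stS st r & forall k, (i < k < r)%N -> ~~ stS st k].
Proof.
move=> i_le.
have has_S : has (stS st) (iota i.+1 (n.+1 - i)) by apply/hasP; exists n.+1; rewrite ?mem_iota //; lia.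
have [r_range Sr r_first] := head_filter_iota n.+1 has_S.
by rewrite /iR; split=> //; lia.
Qed.

Lemma iR_unique i r : (i <= n)%N -> (i < r)%N -> stS st r ->
  (forall k, (i < k < r)%N -> ~~ stS st k) -> iR n st i = r.
Proof.
move=> i_le i_lt Sr r_first.
have [iR_range S_iR iR_first] := iR_spec i_le.
case: (ltngtP (iR n st i) r) => // [lt|gt].
  by have /negP[] := r_first (iR n st i) ltac:(lia).
by have /negP[] := iR_first r ltac:(lia).
Qed.

(* Both sides say that [i] and [c] lie in the same gap of S, [i] before [c]. *)
Lemma same_gap i c : stS st 0 -> (1 <= c <= n)%N -> (i <= n)%N -> ~~ stS st i -> ~~ stS st c ->
  (iL st c < i < c)%N = (i < c < iR n st i)%N.
Proof.
move=> S0 c_range i_le i_free c_free.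
have [L_lt SL L_last] := @iL_spec c S0 ltac:(lia).
have [iR_range S_iR iR_first] := iR_spec i_le.
apply/idP/idP => /andP [lt1 lt2].
  case: (ltngtP c (iR n st i)) => [_|gt|c_eq]; first by rewrite lt2.
    by have /negP[] := L_last (iR n st i) ltac:(lia).
  by rewrite c_eq S_iR in c_free.
case: (ltngtP (iL st c) i) => [_|gt|L_eq]; first by rewrite lt1.
  by have /negP[] := iR_first (iL st c) ltac:(lia).
by rewrite -L_eq SL in i_free.
Qed.

End Gaps.

Lemma iR_addS (R : realFieldType) n (st st' : state R) c i :
  stS st n.+1 -> (forall k, stS st' k = stS st k || (k == c)) -> (i <= n)%N ->
  iR n st' i = if (i < c < iR n st i)%N then c else iR n st i.
Proof.
move=> Sn S' i_le.
have [iR_range S_iR iR_first] := iR_spec Sn i_le.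
have Sn' : stS st' n.+1 by rewrite S' Sn.
case: ifP => between; apply: (iR_unique Sn') => //; rewrite ?S' ?S_iR ?eqxx ?orbT //;
  try lia; by move=> k k_range; rewrite S' negb_or iR_first /=; lia.
Qed.

Section Run.
Variables (R : realFieldType) (n : nat) (q z : nat -> R) (K : R).
Local Notation run := (run n q z K).
Local Notation cont := (cont n).
Local Notation performed := (performed n q z K).
Local Notation updates := (updates n q z K).
Local Notation istar := (istar n).
Local Notation S t := (stS (run t)).

Lemma run_step t : cont (run t) -> run t.+1 = step n q z (run t).
Proof. by move=> C; rewrite -[LHS]/(step_if n q z (run t)) /step_if C. Qed.

Lemma run_stop t : ~~ cont (run t) -> run t.+1 = run t.
Proof. by move=> C; rewrite -[LHS]/(step_if n q z (run t)) /step_if (negbTE C). Qed.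

Lemma cont_run_le s t : (s <= t)%N -> cont (run t) -> cont (run s).
Proof.
elim: t => [|t IH]; first by rewrite leqn0 => /eqP ->.
rewrite leq_eqVlt => /orP [/eqP -> //|s_le] C; apply: IH s_le _.
by apply: contraTT C => C; rewrite run_stop.
Qed.

Lemma performedE t : performed t = cont (run t).
Proof.
apply/idP/idP => [/allP/(_ t)|C]; first by rewrite mem_iota leqnn; apply.
by apply/allP => s; rewrite mem_iota ltnS => /andP [_ s_le]; exact: cont_run_le C.
Qed.

Lemma stS_run_mono s t i : (s <= t)%N -> S s i -> S t i.
Proof.
elim: t => [|t IH]; first by rewrite leqn0 => /eqP ->.
rewrite leq_eqVlt => /orP [/eqP -> //|s_le] Si.
have [C|C] := boolP (cont (run t)); last by rewrite run_stop // IH.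
by rewrite run_step //= IH.
Qed.

Lemma run_S0 t : S t 0.
Proof. exact: stS_run_mono (leq0n t) _. Qed.

Lemma run_Sn t : S t n.+1.
Proof. by apply: stS_run_mono (leq0n t) _; rewrite /= eqxx. Qed.

Lemma updates_free t i : cont (run t) -> updates t i -> ~~ S t i.
Proof.
move=> C U; have [/andP [c_pos _] _ _] := istar_spec C.
by have [_ _ L_last] := iL_spec (run_S0 t) c_pos; apply: L_last.
Qed.

Lemma count_run_step t : cont (run t) ->
  count (S t.+1) (iota 1 n) = (count (S t) (iota 1 n)).+1.
Proof.
move=> C; have [c_range c_free _] := istar_spec C.
have := count_predUI (S t) (pred1 (istar (run t))) (iota 1 n).
rewrite count_uniq_mem ?iota_uniq // mem_iota c_range.
rewrite (@eq_count _ (predI _ _) pred0) ?count_pred0; last first.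
  by move=> k /=; case: eqP => [->|_]; rewrite ?andbF // (negbTE c_free).
by rewrite run_step // addn0 addn1 => <-.
Qed.

Lemma cont_run_lt t : cont (run t) -> (t < n)%N.
Proof.
have count_ge s : cont (run s) -> (s <= count (S s) (iota 1 n))%N.
  elim: s => // s IH C; have C' := cont_run_le (leqnSn s) C.
  by rewrite count_run_step // ltnS IH.
move=> C; apply: leq_ltn_trans (count_ge t C) _.
case/andP: C => _ has_free.
rewrite -[X in (_ < X)%N](size_iota 1 n) -(count_predC (S t)).
by rewrite -[X in (X < _)%N]addn0 ltn_add2l -has_count.
Qed.

Definition blocker_upto t i : nat :=
  let ts := [seq s <- iota 0 t | performed s && updates s i] in
  if ts is [::] then n.+1 else istar (run (last 0%N ts)).

Lemma blockerE i : blocker n q z K i = blocker_upto n i.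
Proof. by []. Qed.

Lemma blocker_uptoS t i : blocker_upto t.+1 i =
  if performed t && updates t i then istar (run t) else blocker_upto t i.
Proof.
rewrite /blocker_upto -addn1 iotaD filter_cat add0n /=.
case: (_ && _) => /=; last by rewrite cats0.
by case: [seq _ <- _ | _] => //= s ts; rewrite last_cat.
Qed.

Lemma blocker_upto_spec t a : (blocker_upto t a <= n)%N ->
  exists2 T, (T < t)%N & [/\ cont (run T), updates T a & blocker_upto t a = istar (run T)].
Proof.
elim: t => [|t IH]; first by rewrite /blocker_upto /= ltnn.
rewrite blocker_uptoS performedE; case: ifP => [/andP [C U] _|_ /IH [T T_lt spec]].
  by exists t.
by exists T => //; apply: ltnW.
Qed.

Lemma blocker_upto_settled s t i : S s i -> (s <= t)%N -> blocker_upto t i = blocker_upto s i.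
Proof.
move=> Si; elim: t => [|t IH]; first by rewrite leqn0 => /eqP ->.
rewrite leq_eqVlt ltnS => /orP [/eqP -> //|s_le].
rewrite blocker_uptoS performedE; case: ifP => [/andP [C /(updates_free C)]|_]; last exact: IH.
by rewrite (stS_run_mono s_le Si).
Qed.

Lemma run_free_inv t i : (1 <= i <= n)%N -> ~~ S t i ->
  sty (run t) i = avg z i (iR n (run t) i) /\ iR n (run t) i = blocker_upto t i.
Proof.
elim: t i => [|t IH] i i_range i_free.
  suff -> : iR n (run 0) i = n.+1 by [].
  by apply: (iR_unique (run_Sn 0)); [lia | lia | exact: run_Sn | move=> k k_range /=; lia].
have [C|C] := boolP (cont (run t)); last first.
  rewrite blocker_uptoS performedE (negbTE C) run_stop // in i_free *; exact: IH.
set c := istar (run t); set L := iL (run t) c.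
have [c_range c_free _] := istar_spec C.
have S_step k : S t.+1 k = S t k || (k == c) by rewrite run_step.
have iR_step : iR n (run t.+1) i = if (L < i < c)%N then c else iR n (run t) i.
  move: i_free; rewrite S_step negb_or => /andP [i_free _].
  by rewrite (iR_addS (run_Sn t) S_step) -?same_gap ?run_S0 ?run_Sn //; lia.
have sty_step : sty (run t.+1) i = if (L < i < c)%N then avg z i c else sty (run t) i.
  by rewrite run_step.
rewrite blocker_uptoS performedE C iR_step sty_step /updates -/c -/L.
case: ifP => _ //; apply: IH => //.
by move: i_free; rewrite S_step negb_or => /andP [].
Qed.

Lemma blocker_istar T : cont (run T) ->
  blocker n q z K (istar (run T)) = iR n (run T) (istar (run T)).
Proof.
move=> C; have [c_range c_free _] := istar_spec C.
have S_c : S T.+1 (istar (run T)) by rewrite run_step //= eqxx orbT.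
rewrite blockerE (blocker_upto_settled S_c (cont_run_lt C)).
rewrite blocker_uptoS performedE C /updates ltnn andbF.
by have [_ ->] := run_free_inv c_range c_free.
Qed.

Lemma blocker_gt a : (a <= n)%N -> (a < blocker n q z K a)%N.
Proof.
move=> a_le; rewrite blockerE.
by case: (leqP (blocker_upto n a) n) =>
  [/blocker_upto_spec [T _ [_ /andP [_ a_lt] ->]] | /(leq_ltn_trans a_le)].
Qed.

Lemma avg_blocker_lt a : (blocker n q z K a <= n)%N ->
  avg z (blocker n q z K a) (blocker n q z K (blocker n q z K a))
    < avg z a (blocker n q z K a).
Proof.
move=> /blocker_upto_spec [T _ [C U Ba]]; rewrite blockerE Ba blocker_istar //.
have [c_range c_free c_first] := istar_spec C.
set c := istar (run T) in U c_range c_free c_first *.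
have a_free := updates_free C U.
move: (U); rewrite /updates -/c => /andP [L_lt a_lt].
have a_range : (1 <= a <= n)%N by lia.
have c_le : (c <= n)%N by case/andP: c_range.
have [iR_range S_iR iR_first] := iR_spec (run_Sn T) c_le.
have iR_a : iR n (run T) a = iR n (run T) c.
  apply: (iR_unique (run_Sn T)) => //; try lia.
  move=> k k_range; case: (ltngtP k c) => [k_lt|k_gt|->] //; last by apply: iR_first; lia.
  by apply: (updates_free C); rewrite /updates -/c; lia.
have [y_a _] := run_free_inv a_range a_free; have [y_c _] := run_free_inv c_range c_free.
have := c_first a ltac:(lia) a_free.
by rewrite y_a y_c iR_a avg_ltr_splitE //; lia.
Qed.

End Run.

Theorem corollary1 (R : realFieldType) (n : nat) (q z : nat -> R) (K : R) :
  (1 <= n)%N ->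
  0 < q 1%N ->
  (forall i, (1 <= i < n)%N -> q i <= q i.+1) ->
  (forall i, (1 <= i <= n)%N -> 0 < z i) ->
  0 < K ->
  forall (t m j : nat),
    performed n q z K t ->
    (1 <= m)%N ->
    (1 <= j <= n)%N ->
    (forall k, (k < m)%N -> (iter k (blocker n q z K) j <= n)%N) ->
    istar n (run n q z K t) = iter m (blocker n q z K) j ->
    avg z j (blocker n q z K (istar n (run n q z K t)))
      < avg z j (istar n (run n q z K t)).
Proof.
move=> _ _ _ _ _ t m j t_performed m_gt0 _ chain_le c_eq.
rewrite performedE in t_performed.
pose c k := iter k (blocker n q z K) j.
have c_le k : (k <= m)%N -> (c k <= n)%N.
  rewrite leq_eqVlt => /orP [/eqP -> | /chain_le //].
  by rewrite /c -c_eq; have [/andP [_ ->]] := istar_spec t_performed.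
rewrite c_eq; apply: (avg_chain_lt (c := c)) m_gt0 _ _ => k k_le.
  exact: blocker_gt (c_le k k_le).
exact: avg_blocker_lt (c_le k.+1 k_le).
Qed.
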